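(* Consider the multi-agent system with $N$ agents, $\mathcal{I}=\{1,\dots,N\}$, where for each $i\in\mathcal{I}$ \[ \dot x_i=-x_i+B_iu_i,\qquad y_i=h_i(x_i,\mathbf{x}_{-i}), \] with $x_i\in\mathbb{R}^{n_i}$, $u_i\in\mathbb{R}^{m_i}$, $B_i\in\mathbb{R}^{n_i\times m_i}$, in closed loop with the full-information control law \[ \dot u_i=-\frac{1}{\tau_i}B_i^\top \nabla_{x_i}h_i(x_i,\mathbf{x}_{-i}),\qquad \tau_i>0,\ i\in\mathcal{I}, \] equivalently $\dot{\mathbf{u}}=-\boldsymbol{\tau}^{-1}\mathbf{B}^\top F_{\mathrm{x}}(\mathbf{x})$ with $\mathbf{B}=\mathrm{diag}(B_1,\dots,B_N)$ and $\boldsymbol{\tau}=\mathrm{diag}(\tau_1 I_{m_1},\dots,\tau_N I_{m_N})$. Suppose Standing Assumptions 1 and 2 (see context) hold. Then there exists $\tau^*>0$ such that, whenever $\min_{i\in\mathcal{I}}\tau_i\ge\tau^*$, every closed-loop solution $(\mathbf{x}(t),\mathbf{u}(t))$ converges to $(\mathbf{x}^*,\mathbf{u}^* )=(\pi(\mathbf{u}^* ),\mathbf{u}^* )$, where $\mathbf{u}^*$ is a Nash equilibrium of the game below (equivalently, the zero of $F$).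
   Context: Notation: $n=\sum_i n_i$, $m=\sum_i m_i$; $\mathbf{x}=(x_1^\top,\dots,x_N^\top)^\top$, $\mathbf{x}_{-i}$ is $\mathbf{x}$ with block $x_i$ removed (similarly $\mathbf{u}$, $\mathbf{u}_{-i}$). Each $h_i:\mathbb{R}^{n_i}\times\mathbb{R}^{n-n_i}\to\mathbb{R}$. Steady-state map: $\pi(\mathbf{u})=(\pi_1(u_1),\dots,\pi_N(u_N))$ with $\pi_i(u_i)=B_iu_i$ (the equilibrium of $\dot x_i=-x_i+B_iu_i$ under constant input $u_i$); $\pi_{-i}(\mathbf{u}_{-i})$ stacks $\pi_j(u_j)$, $j\ne i$. Game: each agent $i$ solves $\min_{u_i\in\mathbb{R}^{m_i}} h_i(\pi_i(u_i),\pi_{-i}(\mathbf{u}_{-i}))$. A Nash equilibrium is $\mathbf{u}^*$ with $h_i(\pi_i(u_i^* ),\pi_{-i}(\mathbf{u}^*_{-i}))\le \inf_{u_i} h_i(\pi_i(u_i),\pi_{-i}(\mathbf{u}^*_{-i}))$ for all $i$. Pseudo-gradients: $F(\mathbf{u})=\big(\nabla_{u_i}h_i(\pi_i(u_i),\pi_{-i}(\mathbf{u}_{-i}))\big)_{i\in\mathcal{I}}\in\mathbb{R}^m$ and $F_{\mathrm{x}}(\mathbf{x})=\big(\nabla_{x_i}h_i(x_i,\mathbf{x}_{-i})\big)_{i\in\mathcal{I}}\in\mathbb{R}^n$. Standing Assumption 1 (Regularity): for each $i$, $h_i$ is differentiable in $x_i$ and $\nabla_{x_i}h_i$ is Lipschitz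 continuous in $(x_i,\mathbf{x}_{-i})$. Standing Assumption 2 (Strong monotonicity): there is $\mu>0$ with $(F(\mathbf{u})-F(\mathbf{v}))^\top(\mathbf{u}-\mathbf{v})\ge\mu\|\mathbf{u}-\mathbf{v}\|^2$ for all $\mathbf{u},\mathbf{v}\in\mathbb{R}^m$. *)

From Stdlib Require Import Reals.
From mathcomp Require Import all_boot.
Set Implicit Arguments. Unset Strict Implicit. Unset Printing Implicit Defensive.

Local Open Scope R_scope.

Definition sumR (n : nat) (F : 'I_n -> R) : R := \big[Rplus/0]_(k < n) F k.

(* Block vectors: N blocks, block i lives in R^(d i).  BV N d = R^(sum_i d i). *)
Definition BV (N : nat) (d : 'I_N -> nat) : Type := forall i : 'I_N, 'I_(d i) -> R.

Arguments BV : clear implicits.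

Definition bvadd N d (x y : BV N d) : BV N d := fun i k => x i k + y i k.
Definition bvsub N d (x y : BV N d) : BV N d := fun i k => x i k - y i k.
Definition bvdot N d (x y : BV N d) : R := sumR (fun i => sumR (fun k => x i k * y i k)).
Definition bvnorm N d (x : BV N d) : R := sqrt (bvdot x x).
Definition vnorm (n : nat) (v : 'I_n -> R) : R := sqrt (sumR (fun k => v k * v k)).

Definition PartialGrad N d (f : BV N d -> R) (i : 'I_N)
  (g : BV N d -> 'I_(d i) -> R) : Prop :=
  forall (x : BV N d) (eps : R), 0 < eps -> exists delta, 0 < delta /\
    forall dx : BV N d, (forall j, j <> i -> forall k, dx j k = 0) ->
      bvnorm dx < delta ->
      Rabs (f (bvadd x dx) - f x - sumR (fun k => g x k * dx i k)) <= eps * bvnorm dx.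

(* Steady-state map pi(u) = (B_1 u_1, ..., B_N u_N); B i is an n_i x m_i matrix *)
Definition ssmap N (n m : 'I_N -> nat) (B : forall i : 'I_N, 'I_(n i) -> 'I_(m i) -> R)
  (u : BV N m) : BV N n := fun i k => sumR (fun l => B i k l * u i l).

(* Nash equilibrium of the game  min_{u_i} h_i(pi_i(u_i), pi_{-i}(u_{-i})):
   no agent can lower its cost by a unilateral deviation. *)
Definition NashEq N (n m : 'I_N -> nat) (B : forall i : 'I_N, 'I_(n i) -> 'I_(m i) -> R)
  (h : 'I_N -> BV N n -> R) (ustar : BV N m) : Prop :=
  forall (i : 'I_N) (v : BV N m), (forall j, j <> i -> forall l, v j l = ustar j l) ->
    h i (ssmap B ustar) <= h i (ssmap B v).

Definition bv_conv N d (x : R -> BV N d) (xs : BV N d) : Prop :=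
  forall eps, 0 < eps -> exists T, forall t, T <= t -> bvnorm (bvsub (x t) xs) < eps.

Arguments PartialGrad {N d} f i g.
Arguments NashEq {N n m} B h ustar.
Arguments ssmap {N n m} B u _ _.
Arguments bv_conv {N d} x xs.

(* The pseudo-gradient factors as F(u) = B^T F_x(pi(u)) (chain rule plus uniqueness of partial
   gradients), so F is Lipschitz.  A strongly monotone Lipschitz map has a zero u*: the iteration
   u |-> u - a F(u) is a contraction for a small step a.  Along a unilateral deviation of agent i
   the cost h_i(pi(.)) has a nonnegative derivative by monotonicity, so u* is a Nash equilibrium.
   For the closed loop we use V = sum_i tau_i |u_i - u*_i|^2 + c |x - pi(u)|^2.  Strong
   monotonicity bounds the u-part of dV/dt by -mu |u - u*|^2 + (L^2/mu) |x - pi(u)|^2, with L the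
   Lipschitz constant of B^T F_x; the x-part is -2c |x - pi(u)|^2 up to a perturbation of order
   1/tau^2 caused by the drift of pi(u).  Taking c and then the tau_i large gives
   dV/dt <= -kappa V, hence exponential convergence. *)

From HB Require Import structures.
From Stdlib Require Import Reals Lra Psatz FunctionalExtensionality ClassicalEpsilon.
From mathcomp Require Import all_boot.
Local Open Scope R_scope.
Set Implicit Arguments. Unset Strict Implicit.

HB.instance Definition _ := Monoid.isComLaw.Build R 0 Rplus
  (fun x y z => esym (Rplus_assoc x y z)) Rplus_comm Rplus_0_l.

Lemma Rabs_le_inv x e : Rabs x <= e -> - e <= x <= e.
Proof. by rewrite /Rabs; case: Rcase_abs => ? ?; lra. Qed.

Lemma Rdiv_le_0_compat a b : 0 <= a -> 0 < b -> 0 <= a / b.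
Proof. by move=> a0 b0; apply: Rmult_le_pos => //; apply/Rlt_le/Rinv_0_lt_compat. Qed.

Lemma frac_lt1 a : 0 <= a -> a / (a + 1) < 1.
Proof.
move=> a0; apply: (Rmult_lt_reg_r (a + 1)); first lra.
have -> : a / (a + 1) * (a + 1) = a by field; lra.
lra.
Qed.

Lemma le_mul_sqrt_eq0 Z : 0 <= Z -> (forall eps, 0 < eps -> Z <= eps * sqrt Z) -> Z = 0.
Proof.
move=> Z0 small; apply: Rle_antisym => //; apply: Rnot_lt_le => Zpos.
have sZ : 0 < sqrt Z by apply: sqrt_lt_R0.
have := small (sqrt Z / 2) ltac:(lra).
have -> : sqrt Z / 2 * sqrt Z = sqrt Z * sqrt Z / 2 by field.
rewrite sqrt_sqrt; lra.
Qed.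

Lemma pow_lt1_small r y : 0 <= r < 1 -> 0 < y -> exists K, r ^ K < y.
Proof.
move=> r01 y0; have [K rK] := pow_lt_1_zero r ltac:(rewrite Rabs_pos_eq; lra) y y0.
by exists K; move: (rK K (le_n K)); rewrite Rabs_pos_eq //; apply: pow_le; lra.
Qed.

Lemma le_geometric_eq0 x c r : 0 <= r < 1 -> 0 <= x -> (forall k, x <= c * r ^ k) -> x = 0.
Proof.
move=> r01 x0 small; apply: Rle_antisym => //; apply: Rnot_lt_le => xpos.
have c1 : 0 < Rabs c + 1 by have := Rabs_pos c; lra.
have [K rK] := pow_lt1_small r01 (Rdiv_lt_0_compat _ _ xpos c1).
have rK0 : 0 <= r ^ K by apply: pow_le; lra.
have := Rmult_lt_compat_l _ _ _ c1 rK; have -> : (Rabs c + 1) * (x / (Rabs c + 1)) = x by field; lra.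
by have := small K; have := RRle_abs c; nra.
Qed.

Lemma Un_cv_dist_le (a : nat -> R) l b M K :
  Un_cv a l -> (forall p, (K <= p)%nat -> Rabs (a p - b) <= M) -> Rabs (l - b) <= M.
Proof.
move=> al bound; apply: Rnot_lt_le => far.
have [P aP] := al (Rabs (l - b) - M) ltac:(lra).
have := aP (maxn P K) (leP (leq_maxl P K)); rewrite /Rdist => near.
have := bound (maxn P K) (leq_maxr P K).
have := Rabs_triang (l - a (maxn P K)) (a (maxn P K) - b).
rewrite Rabs_minus_sym; have -> : l - a (maxn P K) + (a (maxn P K) - b) = l - b by ring.
lra.
Qed.

Section GeometricSteps.
Variables (a : nat -> R) (c r : R).
Hypothesis r01 : 0 <= r < 1.
Hypothesis steps : forall k, Rabs (a k.+1 - a k) <= c * r ^ k.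

Lemma steps_coef_ge0 : 0 <= c.
Proof. by have := steps 0; have := Rabs_pos (a 1%nat - a 0%nat); rewrite /=; lra. Qed.

Lemma geometric_tail k p : (k <= p)%nat -> Rabs (a p - a k) <= c * r ^ k / (1 - r).
Proof.
move/subnKC <-; move: (p - k)%nat => q.
have c0 := steps_coef_ge0.
have rk0 : 0 <= r ^ k by apply: pow_le; lra.
suff tail : Rabs (a (k + q) - a k) <= c * r ^ k * (1 - r ^ q) / (1 - r).
  apply: Rle_trans tail _; apply: Rmult_le_compat_r; first by apply/Rlt_le/Rinv_0_lt_compat; lra.
  have : 0 <= r ^ q by apply: pow_le; lra.
  by move/(Rmult_le_pos _ _ (Rmult_le_pos _ _ c0 rk0)); lra.
elim: q => [|q IH].
  by rewrite addn0 Rminus_diag Rabs_R0 /= Rminus_diag Rmult_0_r /Rdiv Rmult_0_l; lra.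
have := Rabs_triang (a (k + q).+1 - a (k + q)%nat) (a (k + q)%nat - a k).
have := steps (k + q); rewrite addnS pow_add.
have -> : a (k + q).+1 - a (k + q)%nat + (a (k + q)%nat - a k) = a (k + q).+1 - a k by ring.
have -> : c * r ^ k * (1 - r ^ q.+1) / (1 - r) = c * r ^ k * (1 - r ^ q) / (1 - r) + c * (r ^ k * r ^ q)
  by rewrite /=; field; lra.
lra.
Qed.

Lemma geometric_limit : {l | forall k, Rabs (l - a k) <= c * r ^ k / (1 - r)}.
Proof.
have c0 := steps_coef_ge0.
have cauchy : Cauchy_crit a.
  move=> eps eps0.
  have y0 : 0 < eps * (1 - r) / (2 * (c + 1)) by apply: Rdiv_lt_0_compat; nra.
  have [K rK] := pow_lt1_small r01 y0.
  exists K => p q /leP Kp /leP Kq; rewrite /Rdist.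
  have tail_small : c * r ^ K / (1 - r) < eps / 2.
    apply: (Rmult_lt_reg_r (1 - r)); first lra.
    have -> : c * r ^ K / (1 - r) * (1 - r) = c * r ^ K by field; lra.
    have := Rmult_lt_compat_l (c + 1) _ _ ltac:(lra) rK.
    have -> : (c + 1) * (eps * (1 - r) / (2 * (c + 1))) = eps / 2 * (1 - r) by field; lra.
    have : 0 <= r ^ K by apply: pow_le; lra.
    nra.
  have := geometric_tail Kp; have := geometric_tail Kq.
  have := Rabs_triang (a p - a K) (a K - a q); rewrite (Rabs_minus_sym (a K)).
  have -> : a p - a K + (a K - a q) = a p - a q by ring.
  lra.
have [l al] := R_complete a cauchy.
by exists l => k; apply: (Un_cv_dist_le al (K := k)) => p; apply: geometric_tail.
Qed.

End GeometricSteps.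

(** * Finite sums and block vectors *)

Section FiniteSums.
Variable n : nat.
Implicit Types f g : 'I_n -> R.

Lemma eq_sumR f g : (forall k, f k = g k) -> sumR f = sumR g.
Proof. by move=> fg; apply: eq_bigr => k _. Qed.

Lemma sumRD f g : sumR (fun k => f k + g k) = sumR f + sumR g.
Proof. exact: big_split. Qed.

Lemma mulR_sumr c f : c * sumR f = sumR (fun k => c * f k).
Proof. by apply: (big_ind2 (fun a b => c * a = b)) => [|a b x y <- <-|] //; ring. Qed.

Lemma sumR_mulr c f : sumR f * c = sumR (fun k => f k * c).
Proof. by rewrite Rmult_comm mulR_sumr; apply: eq_sumR => k; ring. Qed.

Lemma sumRB f g : sumR (fun k => f k - g k) = sumR f - sumR g.
Proof.
have -> : sumR f - sumR g = sumR f + -1 * sumR g by ring.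
by rewrite mulR_sumr -sumRD; apply: eq_sumR => k; ring.
Qed.

Lemma sumR_eq0 f : (forall k, f k = 0) -> sumR f = 0.
Proof. by move=> f0; rewrite /sumR big1. Qed.

Lemma ler_sumR f g : (forall k, f k <= g k) -> sumR f <= sumR g.
Proof. by move=> fg; apply: (big_ind2 (fun a b => a <= b)) => *; [lra | lra | apply: fg]. Qed.

Lemma sumR_ge0 f : (forall k, 0 <= f k) -> 0 <= sumR f.
Proof. by move=> f0; rewrite -(sumR_eq0 (f := fun _ => 0)) //; apply: ler_sumR. Qed.

Lemma sumR_single f i : (forall j, j <> i -> f j = 0) -> sumR f = f i.
Proof. by move=> f0; rewrite /sumR (bigD1 i) //= big1 ?Rplus_0_r // => j /eqP /f0. Qed.

Lemma ler_sumR_term f i : (forall k, 0 <= f k) -> f i <= sumR f.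
Proof.
move=> f0; rewrite /sumR (bigD1 i) //=; set rest := \big[_/_]_(_ < _ | _) _.
have : 0 <= rest by apply: big_ind => *; [lra | lra | apply: f0].
lra.
Qed.

Lemma mulR_sumsum g f : sumR f * sumR g = sumR (fun k => sumR (fun l => f k * g l)).
Proof.
rewrite Rmult_comm mulR_sumr; apply: eq_sumR => l.
by rewrite Rmult_comm mulR_sumr.
Qed.

(* Lagrange's identity: 2 (A B - S^2) is the sum of the squares (a_k b_l - a_l b_k)^2. *)
Lemma sumR_CauchySchwarz f g :
  sumR (fun k => f k * g k) ^ 2 <= sumR (fun k => f k * f k) * sumR (fun k => g k * g k).
Proof.
set A := sumR _ * sumR _.
have lagrange : 2 * (A - sumR (fun k => f k * g k) ^ 2)
    = sumR (fun k => sumR (fun l => (f k * g l - f l * g k) ^ 2)).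
  rewrite /A /= Rmult_1_r !mulR_sumsum.
  set P := sumR (fun k => sumR (fun l => f k * f k * (g l * g l))).
  set P' := sumR (fun k => sumR (fun l => f l * f l * (g k * g k))).
  set Q := sumR (fun k => sumR (fun l => f k * g k * (f l * g l))).
  have swap : P = P' by exact: exchange_big.
  have -> : 2 * (P - Q) = P + P' + -2 * Q by rewrite -swap; ring.
  rewrite mulR_sumr -!sumRD; apply: eq_sumR => k.
  by rewrite mulR_sumr -!sumRD; apply: eq_sumR => l; ring.
have : 0 <= sumR (fun k => sumR (fun l => (f k * g l - f l * g k) ^ 2)).
  by apply: sumR_ge0 => k; apply: sumR_ge0 => l; apply: pow2_ge_0.
lra.
Qed.

End FiniteSums.

Lemma exchange_sumR n p (f : 'I_n -> 'I_p -> R) :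
  sumR (fun k => sumR (f k)) = sumR (fun l => sumR (fun k => f k l)).
Proof. exact: exchange_big. Qed.

Section BlockVectors.
Variables (N : nat) (d : 'I_N -> nat).
Implicit Types a b x y : BV N d.

Definition bvsum a := sumR (fun i => sumR (a i)).
Definition nsq x := bvdot x x.

Lemma bv_ext x y : (forall i k, x i k = y i k) -> x = y.
Proof. by move=> xy; apply: functional_extensionality_dep => i; apply: functional_extensionality. Qed.

Lemma eq_bvsum a b : (forall i k, a i k = b i k) -> bvsum a = bvsum b.
Proof. by move=> ab; apply: eq_sumR => i; apply: eq_sumR. Qed.

Lemma ler_bvsum a b : (forall i k, a i k <= b i k) -> bvsum a <= bvsum b.
Proof. by move=> ab; apply: ler_sumR => i; apply: ler_sumR. Qed.

Lemma bvsum_ge0 a : (forall i k, 0 <= a i k) -> 0 <= bvsum a.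
Proof. by move=> a0; apply: sumR_ge0 => i; apply: sumR_ge0. Qed.

Lemma bvsumD a b : bvsum (fun i k => a i k + b i k) = bvsum a + bvsum b.
Proof. by rewrite /bvsum -sumRD; apply: eq_sumR => i; apply: sumRD. Qed.

Lemma mulR_bvsum c a : c * bvsum a = bvsum (fun i k => c * a i k).
Proof. by rewrite /bvsum mulR_sumr; apply: eq_sumR => i; apply: mulR_sumr. Qed.

Lemma ler_bvsum_entry a i k : (forall i k, 0 <= a i k) -> a i k <= bvsum a.
Proof.
move=> a0; apply: Rle_trans (ler_sumR_term k (a0 i)) _.
by apply: (ler_sumR_term (f := fun j => sumR (a j))) => j; apply: sumR_ge0.
Qed.

Lemma bvsum_block a i : (forall j, j <> i -> forall k, a j k = 0) -> bvsum a = sumR (a i).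
Proof. by move=> a0; rewrite /bvsum (sumR_single (i := i)) // => j /a0 /sumR_eq0. Qed.

Lemma eq_nsq x y : (forall i k, x i k = y i k) -> nsq x = nsq y.
Proof. by move=> xy; apply: eq_bvsum => i k; rewrite xy. Qed.

Lemma nsq_ge0 x : 0 <= nsq x.
Proof. by apply: bvsum_ge0 => i k; apply: Rle_0_sqr. Qed.

Lemma bvnorm_sq x : bvnorm x ^ 2 = nsq x.
Proof. by rewrite /= Rmult_1_r sqrt_sqrt //; apply: nsq_ge0. Qed.

Lemma sqr_le_nsq x i k : x i k * x i k <= nsq x.
Proof. by apply: (ler_bvsum_entry (a := fun i k => x i k * x i k)) => *; apply: Rle_0_sqr. Qed.

Lemma nsq_eq0 x : nsq x = 0 -> forall i k, x i k = 0.
Proof.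
move=> x0 i k; have := sqr_le_nsq x k; have := Rle_0_sqr (x i k).
rewrite x0 /Rsqr => ? ?; apply: Rsqr_0_uniq; rewrite /Rsqr; lra.
Qed.

Lemma nsq_le_entries x c : (forall i k, Rabs (x i k) <= c) ->
  nsq x <= c * c * bvsum (fun _ _ => 1).
Proof.
move=> xc; rewrite mulR_bvsum; apply: ler_bvsum => i k.
have := xc i k; rewrite Rmult_1_r /Rabs; case: Rcase_abs => ? ?; nra.
Qed.

Lemma nsqZ s x : nsq (fun i k => s * x i k) = s * s * nsq x.
Proof. by rewrite /nsq /bvdot -!/(bvsum _) mulR_bvsum; apply: eq_bvsum => i k; ring. Qed.

Lemma bvnormZ s x : bvnorm (fun i k => s * x i k) = Rabs s * bvnorm x.
Proof.
rewrite /bvnorm -/(nsq _) -/(nsq x) nsqZ sqrt_mult; last exact: nsq_ge0; last exact: Rle_0_sqr.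
by rewrite sqrt_Rsqr_abs.
Qed.

Lemma eq_bvdotl x y z : (forall i k, x i k = y i k) -> bvdot x z = bvdot y z.
Proof. by move=> xy; apply: eq_bvsum => i k; rewrite xy. Qed.

Lemma nsqN x : nsq (fun i k => - x i k) = nsq x.
Proof. by apply: eq_bvsum => i k; ring. Qed.

Lemma nsq_bvsubC x y : nsq (bvsub x y) = nsq (bvsub y x).
Proof. by apply: eq_bvsum => i k; rewrite /bvsub; ring. Qed.

Lemma young c x y : 0 < c -> 2 * bvdot x y <= c * nsq x + / c * nsq y.
Proof.
move=> c0; rewrite /nsq /bvdot -!/(bvsum _) !mulR_bvsum -bvsumD; apply: ler_bvsum => i k.
have : 0 <= / c * (c * x i k - y i k) ^ 2 by apply: Rmult_le_pos; [apply/Rlt_le/Rinv_0_lt_compat | apply: pow2_ge_0].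
have -> : / c * (c * x i k - y i k) ^ 2
    = c * (x i k * x i k) - 2 * (x i k * y i k) + / c * (y i k * y i k) by field; lra.
lra.
Qed.

Lemma nsqD_le x y : nsq (fun i k => x i k + y i k) <= 2 * nsq x + 2 * nsq y.
Proof.
rewrite /nsq /bvdot -!/(bvsum _) !mulR_bvsum -bvsumD; apply: ler_bvsum => i k.
by have := pow2_ge_0 (x i k - y i k); nra.
Qed.

Definition wnsq (c : 'I_N -> R) x := sumR (fun i => c i * sumR (fun k => x i k * x i k)).

Lemma wnsq_le c x : (forall i, 0 <= c i) -> wnsq c x <= sumR c * nsq x.
Proof.
move=> c0; rewrite /nsq /bvdot mulR_sumr; apply: ler_sumR => i.
apply: Rmult_le_compat_r; first by apply: sumR_ge0 => k; apply: Rle_0_sqr.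
exact: (ler_sumR_term (f := c)).
Qed.

Lemma wnsq_ge c c0 x : (forall i, c0 <= c i) -> c0 * nsq x <= wnsq c x.
Proof.
move=> c0c; rewrite /nsq /bvdot mulR_sumr; apply: ler_sumR => i.
by apply: Rmult_le_compat_r; [apply: sumR_ge0 => k; apply: Rle_0_sqr | apply: c0c].
Qed.

Definition bvblock (i0 : 'I_N) (z : 'I_(d i0) -> R) : BV N d := fun j =>
  match j =P i0 with
  | ReflectT e => fun k => z (cast_ord (congr1 d e) k)
  | ReflectF _ => fun _ => 0
  end.
Arguments bvblock i0 z i _ : clear implicits.

Lemma bvblock_on i z k : bvblock i z i k = z k.
Proof. by rewrite /bvblock; case: eqP => // e; congr z; apply: val_inj. Qed.

Lemma bvblock_off i z j k : j <> i -> bvblock i z j k = 0.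
Proof. by rewrite /bvblock; case: eqP. Qed.

Lemma nsq_bvblock i z : nsq (bvblock i z) = sumR (fun k => z k * z k).
Proof.
rewrite /nsq /bvdot -/(bvsum _) (bvsum_block (i := i)) => [|j ji k].
  by apply: eq_sumR => k; rewrite bvblock_on.
by rewrite bvblock_off //; ring.
Qed.

End BlockVectors.
Arguments bvblock {N d} i0 z i _.

(** * The steady-state map *)

Section SteadyStateMap.
Variables (N : nat) (n m : 'I_N -> nat) (B : forall i : 'I_N, 'I_(n i) -> 'I_(m i) -> R).
Arguments B : clear implicits.

Definition ssmapT (z : BV N n) : BV N m :=
  fun i l => sumR (fun k : 'I_(n i) => B i k l * z i k).
Arguments ssmapT z i _ : clear implicits.

Definition frob2 := sumR (fun i => sumR (fun k => sumR (fun l => B i k l * B i k l))).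

Lemma frob2_ge0 : 0 <= frob2.
Proof. by apply: sumR_ge0 => i; apply: sumR_ge0 => k; apply: sumR_ge0 => l; apply: Rle_0_sqr. Qed.

Lemma ssmapB u v i k : ssmap B (bvsub u v) i k = ssmap B u i k - ssmap B v i k.
Proof.
by rewrite /ssmap -sumRB; apply: eq_sumR => l; rewrite /bvsub; ring.
Qed.

Lemma ssmapD u v i k : ssmap B (bvadd u v) i k = ssmap B u i k + ssmap B v i k.
Proof. by rewrite /ssmap -sumRD; apply: eq_sumR => l; rewrite /bvadd; ring. Qed.

Lemma ssmapTB z1 z2 i l : ssmapT (bvsub z1 z2) i l = ssmapT z1 i l - ssmapT z2 i l.
Proof.
by rewrite /ssmapT -sumRB; apply: eq_sumR => k; rewrite /bvsub; ring.
Qed.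

Lemma nsq_ssmap_le v : nsq (ssmap B v) <= frob2 * nsq v.
Proof.
apply: Rle_trans (wnsq_le v (c := fun i => sumR (fun k => sumR (fun l => B i k l * B i k l))) _);
  last by move=> i; apply: sumR_ge0 => k; apply: sumR_ge0 => l; apply: Rle_0_sqr.
apply: ler_sumR => i; rewrite sumR_mulr; apply: ler_sumR => k.
by have := sumR_CauchySchwarz (B i k) (v i); rewrite /ssmap /= Rmult_1_r.
Qed.

Lemma nsq_ssmapT_le z : nsq (ssmapT z) <= frob2 * nsq z.
Proof.
rewrite /frob2 (eq_sumR (g := fun i => sumR (fun l => sumR (fun k => B i k l * B i k l))));
  last by move=> i; apply: exchange_sumR.
apply: Rle_trans (wnsq_le z (c := fun i => sumR (fun l => sumR (fun k => B i k l * B i k l))) _);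
  last by move=> i; apply: sumR_ge0 => l; apply: sumR_ge0 => k; apply: Rle_0_sqr.
apply: ler_sumR => i; rewrite sumR_mulr; apply: ler_sumR => l.
by have := sumR_CauchySchwarz (fun k => B i k l) (z i); rewrite /ssmapT /= Rmult_1_r.
Qed.

Lemma nsq_ssmapT_lip z1 z2 : nsq (bvsub (ssmapT z1) (ssmapT z2)) <= frob2 * nsq (bvsub z1 z2).
Proof.
by rewrite (eq_nsq (y := ssmapT (bvsub z1 z2))) => [|i l]; [apply: nsq_ssmapT_le | rewrite ssmapTB].
Qed.

Lemma nsq_ssmap_lip u v : nsq (bvsub (ssmap B u) (ssmap B v)) <= frob2 * nsq (bvsub u v).
Proof.
by rewrite (eq_nsq (y := ssmap B (bvsub u v))) => [|i k]; [apply: nsq_ssmap_le | rewrite ssmapB].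
Qed.

Lemma bvnorm_ssmap_le v : bvnorm (ssmap B v) <= sqrt frob2 * bvnorm v.
Proof.
rewrite /bvnorm -sqrt_mult; [|exact: frob2_ge0|exact: nsq_ge0].
by apply: sqrt_le_1_alt; apply: nsq_ssmap_le.
Qed.

End SteadyStateMap.
Arguments ssmapT {N n m} B z i _.

(** * Partial gradients *)

Lemma PartialGrad_unique N (d : 'I_N -> nat) (f : BV N d -> R) i
    (g1 g2 : BV N d -> 'I_(d i) -> R) :
  PartialGrad f i g1 -> PartialGrad f i g2 -> forall x k, g1 x k = g2 x k.
Proof.
move=> dg1 dg2 x k.
(* Both expansions in the direction s (g1 x - g2 x) give |g1 x - g2 x|^2 <= eps |g1 x - g2 x|. *)
pose z k := g1 x k - g2 x k.
suff /nsq_eq0 z0 : nsq (bvblock i z) = 0 by have := z0 i k; rewrite bvblock_on /z; lra.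
apply: le_mul_sqrt_eq0 => [|eps eps0]; first exact: nsq_ge0.
set Z := nsq _; have Z0 : 0 <= Z := nsq_ge0 _; have sZ := sqrt_pos Z.
have [d1 [d1pos fd1]] := dg1 x (eps / 2) ltac:(lra).
have [d2 [d2pos fd2]] := dg2 x (eps / 2) ltac:(lra).
have d12 := Rmin_pos _ _ d1pos d2pos.
pose s := Rmin d1 d2 / (sqrt Z + 1).
have s0 : 0 < s by apply: Rdiv_lt_0_compat; lra.
have s_small : s * sqrt Z < Rmin d1 d2.
  have -> : s * sqrt Z = Rmin d1 d2 * (sqrt Z / (sqrt Z + 1)) by rewrite /s; field; lra.
  by have := frac_lt1 sZ; nra.
pose dx : BV N d := fun j l => s * bvblock i z j l.
have dx_off : forall j, j <> i -> forall l, dx j l = 0 by move=> j ji l; rewrite /dx bvblock_off //; ring.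
have ndx : bvnorm dx = s * sqrt Z by rewrite /dx bvnormZ Rabs_pos_eq; [|lra].
have near1 := fd1 dx dx_off ltac:(rewrite ndx; have := Rmin_l d1 d2; lra).
have near2 := fd2 dx dx_off ltac:(rewrite ndx; have := Rmin_r d1 d2; lra).
have gap : sumR (fun l => g1 x l * dx i l) - sumR (fun l => g2 x l * dx i l) = s * Z.
  rewrite -sumRB /Z nsq_bvblock mulR_sumr; apply: eq_sumR => l.
  by rewrite /dx bvblock_on /z; ring.
move: near1 near2; rewrite ndx => /Rabs_le_inv near1 /Rabs_le_inv near2.
apply: (Rmult_le_reg_l s) => //; nra.
Qed.

Lemma PartialGrad_ssmap N (n m : 'I_N -> nat) (B : forall i : 'I_N, 'I_(n i) -> 'I_(m i) -> R)
    (f : BV N n -> R) i (g : BV N n -> 'I_(n i) -> R) :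
  PartialGrad f i g ->
  PartialGrad (fun u => f (ssmap B u)) i (fun u l => sumR (fun k => B i k l * g (ssmap B u) k)).
Proof.
move=> dg u eps eps0.
pose K := sqrt (frob2 B) + 1.
have K0 : 0 < K by have := sqrt_pos (frob2 B); rewrite /K; lra.
have [del [del0 fdel]] := dg (ssmap B u) (eps / K) ltac:(exact: Rdiv_lt_0_compat).
exists (del / K); split => [|dv dv_off dv_small]; first exact: Rdiv_lt_0_compat.
pose dx := ssmap B dv.
have dx_off : forall j, j <> i -> forall k, dx j k = 0.
  by move=> j ji k; rewrite /dx /ssmap sumR_eq0 // => l; rewrite dv_off //; ring.
have ndx : bvnorm dx <= K * bvnorm dv.
  apply: Rle_trans (bvnorm_ssmap_le B dv) _.
  by apply: Rmult_le_compat_r; [exact: sqrt_pos | rewrite /K; lra].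
have small : K * bvnorm dv < del.
  by have := Rmult_lt_compat_l K _ _ K0 dv_small; have -> : K * (del / K) = del by field; lra.
have := fdel dx dx_off (Rle_lt_trans _ _ _ ndx small).
have -> : bvadd (ssmap B u) dx = ssmap B (bvadd u dv) by apply: bv_ext => j k; rewrite ssmapD.
have -> : sumR (fun k => g (ssmap B u) k * dx i k)
    = sumR (fun l => sumR (fun k => B i k l * g (ssmap B u) k) * dv i l).
  rewrite (eq_sumR (g := fun l => sumR (fun k => g (ssmap B u) k * (B i k l * dv i l)))) => [|l].
    by rewrite exchange_sumR; apply: eq_sumR => k; rewrite mulR_sumr.
  by rewrite sumR_mulr; apply: eq_sumR => k; ring.
move=> H; apply: Rle_trans H _.
have -> : eps * bvnorm dv = eps / K * (K * bvnorm dv) by field; lra.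
by apply: Rmult_le_compat_l => //; apply/Rlt_le/Rdiv_lt_0_compat.
Qed.

Lemma PartialGrad_line N (d : 'I_N -> nat) (f : BV N d -> R) i (g : BV N d -> 'I_(d i) -> R)
    (x dir : BV N d) t :
  PartialGrad f i g -> (forall j, j <> i -> forall k, dir j k = 0) ->
  derivable_pt_lim (fun s => f (fun j k => x j k + s * dir j k)) t
    (sumR (fun k => g (fun j k => x j k + t * dir j k) k * dir i k)).
Proof.
move=> dg dir_off eps eps0.
set xt : BV N d := fun j k => x j k + t * dir j k.
have nd0 : 0 <= bvnorm dir by apply: sqrt_pos.
have [del [del0 fdel]] := dg xt (eps / (bvnorm dir + 1)) ltac:(apply: Rdiv_lt_0_compat; lra).
have del'0 : 0 < del / (bvnorm dir + 1) by apply: Rdiv_lt_0_compat; lra.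
exists (mkposreal _ del'0) => s s0 /= s_small.
have abs_s : 0 < Rabs s by apply: Rabs_pos_lt.
pose dx : BV N d := fun j k => s * dir j k.
have dx_off : forall j, j <> i -> forall k, dx j k = 0 by move=> j ji k; rewrite /dx dir_off //; ring.
have ndx : bvnorm dx = Rabs s * bvnorm dir by rewrite /dx bvnormZ.
have dx_small : bvnorm dx < del.
  rewrite ndx; apply: Rle_lt_trans (_ : Rabs s * (bvnorm dir + 1) < _).
    by apply: Rmult_le_compat_l; [apply: Rabs_pos | lra].
  by have := Rmult_lt_compat_r (bvnorm dir + 1) _ _ ltac:(lra) s_small;
    have -> : del / (bvnorm dir + 1) * (bvnorm dir + 1) = del by field; lra.
have := fdel dx dx_off dx_small.
have -> : bvadd xt dx = (fun j k => x j k + (t + s) * dir j k).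
  by apply: bv_ext => j k; rewrite /bvadd /xt /dx; ring.
rewrite -/xt ndx (eq_sumR (g := fun k => s * (g xt k * dir i k))) -?mulR_sumr => [|k]; last by rewrite /dx; ring.
set D := sumR _; set fs := f _; set ft := f xt => near.
have -> : (fs - ft) / s - D = (fs - ft - s * D) / s by field.
rewrite /Rdiv Rabs_mult Rabs_inv; apply: (Rmult_lt_reg_r (Rabs s)) => //.
rewrite Rmult_assoc Rinv_l ?Rmult_1_r; last lra.
apply: Rle_lt_trans near _.
have -> : eps / (bvnorm dir + 1) * (Rabs s * bvnorm dir) = eps * Rabs s * (bvnorm dir / (bvnorm dir + 1))
  by field; lra.
have := frac_lt1 nd0.
have : 0 < eps * Rabs s by nra.
have : 0 <= bvnorm dir / (bvnorm dir + 1) by apply: Rdiv_le_0_compat; lra.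
nra.
Qed.

Lemma nsq_lipschitz_of_blocks N (n d : 'I_N -> nat) (f : forall i : 'I_N, BV N n -> 'I_(d i) -> R) :
  (forall i, exists L, forall x y, vnorm (fun k => f i x k - f i y k) <= L * bvnorm (bvsub x y)) ->
  exists Lam, 0 <= Lam /\ forall x y, nsq (fun i k => f i x k - f i y k) <= Lam * nsq (bvsub x y).
Proof.
move=> lip; pose L i := proj1_sig (constructive_indefinite_description _ (lip i)).
have L_lip i x y := proj2_sig (constructive_indefinite_description _ (lip i)) x y : vnorm _ <= L i * _.
exists (sumR (fun i => L i * L i)); split=> [|x y]; first by apply: sumR_ge0 => i; apply: Rle_0_sqr.
rewrite sumR_mulr; apply: ler_sumR => i.
have := L_lip i x y; rewrite /vnorm /bvnorm -/(nsq _).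
set S := sumR _ => le_S; have S0 : 0 <= S by apply: sumR_ge0 => k; apply: Rle_0_sqr.
rewrite -(sqrt_sqrt S) // -(sqrt_sqrt (nsq (bvsub x y))); last exact: nsq_ge0.
have := sqrt_pos S; have := sqrt_pos (nsq (bvsub x y)); nra.
Qed.

(** * Zeros of strongly monotone maps and Nash equilibria *)

Section StronglyMonotoneZero.
Variables (N : nat) (m : 'I_N -> nat) (Phi : BV N m -> BV N m) (C mu : R).
Arguments Phi : clear implicits.
Hypotheses (C0 : 0 <= C) (mu0 : 0 < mu).
Hypothesis Phi_lip : forall u v, nsq (bvsub (Phi u) (Phi v)) <= C * nsq (bvsub u v).
Hypothesis Phi_mono : forall u v, bvdot (bvsub (Phi u) (Phi v)) (bvsub u v) >= mu * nsq (bvsub u v).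

(* The step mu / kappa makes the gradient step a contraction with squared factor C / kappa. *)
Let kappa := C + mu * mu.
Let q := C / kappa.
Let r := sqrt q.

Definition gradient_step u : BV N m := fun i l => u i l - mu / kappa * Phi u i l.
Arguments gradient_step u i l : clear implicits.

Lemma kappa_pos : 0 < kappa.
Proof. by rewrite /kappa; nra. Qed.

Lemma r_bounds : 0 <= r < 1.
Proof.
have k0 := kappa_pos; split; first exact: sqrt_pos.
rewrite /r -sqrt_1; apply: sqrt_lt_1_alt; split; first by apply: Rdiv_le_0_compat.
by apply: (Rmult_lt_reg_r kappa) => //; rewrite /q /kappa; field_simplify; nra.
Qed.

Lemma gradient_step_contraction u v :
  nsq (bvsub (gradient_step u) (gradient_step v)) <= r ^ 2 * nsq (bvsub u v).
Proof.
have k0 := kappa_pos.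
set dv := bvsub u v; set dF := bvsub (Phi u) (Phi v).
have -> : nsq (bvsub (gradient_step u) (gradient_step v))
    = nsq dv + -2 * (mu / kappa) * bvdot dF dv + (mu / kappa) ^ 2 * nsq dF.
  rewrite /nsq /bvdot -!/(bvsum _) !mulR_bvsum -!bvsumD; apply: eq_bvsum => i l.
  by rewrite /dv /dF /gradient_step /bvsub; ring.
rewrite /r pow2_sqrt; last by apply: Rdiv_le_0_compat; lra.
have := Phi_mono u v; have := Phi_lip u v; rewrite -/dv -/dF => lip mono.
have a0 : 0 < mu / kappa by apply: Rdiv_lt_0_compat.
have := Rmult_le_compat_l _ _ _ (pow2_ge_0 (mu / kappa)) lip.
have := Rmult_le_compat_l _ _ _ (Rlt_le _ _ a0) (Rge_le _ _ mono).
have := Rmult_le_pos _ _ (pow2_ge_0 (mu * mu / kappa)) (nsq_ge0 dv).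
have -> : q * nsq dv = nsq dv - 2 * (mu / kappa) * (mu * nsq dv)
    + (mu / kappa) ^ 2 * (C * nsq dv) + (mu * mu / kappa) ^ 2 * nsq dv.
  by rewrite /q /kappa; field; nra.
lra.
Qed.

Let iterate k : BV N m := iter k gradient_step (fun _ _ => 0).
Arguments iterate k : clear implicits.
Let D0 := nsq (bvsub (iterate 1) (iterate 0)).

Lemma iterate_step_entry k i l : Rabs (iterate k.+1 i l - iterate k i l) <= sqrt D0 * r ^ k.
Proof.
have r0 := proj1 r_bounds; have D00 := sqrt_pos D0.
have steps : nsq (bvsub (iterate k.+1) (iterate k)) <= (sqrt D0 * r ^ k) ^ 2.
  elim: k => [|k IH]; first by rewrite pow_O Rmult_1_r pow2_sqrt; [exact: Rle_refl | exact: nsq_ge0].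
  apply: Rle_trans (gradient_step_contraction _ _) _.
  have -> : (sqrt D0 * r ^ k.+1) ^ 2 = r ^ 2 * (sqrt D0 * r ^ k) ^ 2 by rewrite /=; ring.
  by apply: Rmult_le_compat_l => //; apply: pow2_ge_0.
have := Rle_trans _ _ _ (sqr_le_nsq _ l) steps; rewrite /bvsub /= Rmult_1_r => sq.
rewrite -(Rabs_pos_eq (sqrt D0 * r ^ k)); last by apply: Rmult_le_pos => //; apply: pow_le.
exact: Rsqr_le_abs_0.
Qed.

Definition iterate_limit : BV N m := fun i l =>
  proj1_sig (geometric_limit r_bounds (fun k => iterate_step_entry k l)).
Arguments iterate_limit : clear implicits.

Lemma iterate_limit_close K i l :
  Rabs (iterate_limit i l - iterate K i l) <= sqrt D0 * r ^ K / (1 - r).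
Proof. exact: (proj2_sig (geometric_limit r_bounds (fun k => iterate_step_entry k l))). Qed.

Lemma iterate_limit_fixed i l : gradient_step iterate_limit i l = iterate_limit i l.
Proof.
have [r0 r1] := r_bounds; set u := iterate_limit; set e := sqrt D0 / (1 - r).
have e0 : 0 <= e by apply: Rdiv_le_0_compat; [exact: sqrt_pos | lra].
pose M := bvsum (fun (i : 'I_N) (_ : 'I_(m i)) => 1).
have M0 : 0 <= M by apply: bvsum_ge0 => *; lra.
have close K : nsq (bvsub (iterate K) u) <= (e * r ^ K) * (e * r ^ K) * M.
  apply: nsq_le_entries => j k; rewrite Rabs_minus_sym.
  by apply: Rle_trans (iterate_limit_close K k) _; right; rewrite /e; field; lra.
suff /nsq_eq0 fixed : nsq (bvsub (gradient_step u) u) = 0 by have := fixed i l; rewrite /bvsub; lra.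
apply: (le_geometric_eq0 (c := 4 * (e * e * M)) (r := r * r)) => [|| K]; [nra | exact: nsq_ge0 |].
have split_fixed : forall j (k : 'I_(m j)), bvsub (gradient_step u) u k
    = bvsub (gradient_step u) (gradient_step (iterate K)) k + bvsub (iterate K.+1) u k.
  by move=> j k; rewrite /bvsub /=; ring.
rewrite (eq_nsq split_fixed); apply: Rle_trans (nsqD_le _ _) _.
have := Rle_trans _ _ _ (gradient_step_contraction u (iterate K)) (Rmult_le_compat_l _ _ _ (pow2_ge_0 r)
  (Rle_trans _ _ _ (Req_le _ _ (nsq_bvsubC _ _)) (close K))).
have := close K.+1; rewrite Rpow_mult_distr /=.
have P0 : 0 <= e * e * M * (r ^ K * r ^ K) by apply: Rmult_le_pos; nra.
have rr : r * r <= 1 by nra.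
have := Rmult_le_compat_r _ _ _ P0 rr.
lra.
Qed.

Lemma exists_zero_of_strongly_monotone : exists u, forall i l, Phi u i l = 0.
Proof.
exists iterate_limit => i l; have := iterate_limit_fixed l; rewrite /gradient_step.
have : 0 < mu / kappa by apply: Rdiv_lt_0_compat => //; exact: kappa_pos.
nra.
Qed.

End StronglyMonotoneZero.

Lemma NashEq_of_monotone_zero N (n m : 'I_N -> nat)
    (B : forall i : 'I_N, 'I_(n i) -> 'I_(m i) -> R) (h : 'I_N -> BV N n -> R)
    (F : forall i : 'I_N, BV N m -> 'I_(m i) -> R) (us : BV N m) :
  (forall i, PartialGrad (fun u => h i (ssmap B u)) i (F i)) ->
  (forall u v, 0 <= bvdot (fun i l => F i u l - F i v l) (bvsub u v)) ->
  (forall i l, F i us l = 0) -> NashEq B h us.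
Proof.
move=> dF mono us0 i v v_off.
pose dir := bvsub v us.
have dir_off : forall j, j <> i -> forall l, dir j l = 0.
  by move=> j ji l; rewrite /dir /bvsub v_off //; ring.
pose w s : BV N m := fun j l => us j l + s * dir j l.
pose phi s := h i (ssmap B (w s)).
pose phi' s := sumR (fun l => F i (w s) l * dir i l).
have dphi s : derivable_pt_lim phi s (phi' s) by exact: (PartialGrad_line us s (dF i) dir_off).
have phi'_ge0 s : 0 < s -> 0 <= phi' s.
  move=> s0; have := mono (w s) us.
  have -> : bvdot (fun j l => F j (w s) l - F j us l) (bvsub (w s) us) = s * phi' s.
    rewrite /bvdot -/(bvsum _) (bvsum_block (i := i)) => [|j ji l]; last by rewrite /bvsub /w dir_off //; ring.
    by rewrite /phi' mulR_sumr; apply: eq_sumR => l; rewrite us0 /bvsub /w; ring.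
  by move=> ?; apply: (Rmult_le_reg_l s) => //; lra.
have [c [mvt c01]] := MVT_cor2 phi phi' 0 1 Rlt_0_1 (fun c _ => dphi c).
have phi0 : phi 0 = h i (ssmap B us) by rewrite /phi; congr (h i (ssmap B _)); apply: bv_ext => j l; rewrite /w; ring.
have phi1 : phi 1 = h i (ssmap B v) by rewrite /phi; congr (h i (ssmap B _)); apply: bv_ext => j l; rewrite /w /dir /bvsub; ring.
have := phi'_ge0 c (proj1 c01).
rewrite -phi0 -phi1; nra.
Qed.

(** * Lyapunov analysis of the closed loop *)

Lemma derivable_pt_lim_sumR n (f : 'I_n -> R -> R) (f' : 'I_n -> R) t :
  (forall k, derivable_pt_lim (f k) t (f' k)) ->
  derivable_pt_lim (fun s => sumR (fun k => f k s)) t (sumR f').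
Proof.
elim: n f f' => [|n IH] f f' df.
  rewrite /sumR big_ord0 (_ : (fun s => _) = fun _ => 0); first exact: derivable_pt_lim_const.
  by apply: functional_extensionality => s; rewrite big_ord0.
rewrite /sumR big_ord_recr (_ : (fun s => _) = fun s => sumR (fun k => f (widen_ord (leqnSn n) k) s) + f ord_max s).
  by apply: derivable_pt_lim_plus; [apply: IH => k | ].
by apply: functional_extensionality => s; rewrite big_ord_recr.
Qed.

Lemma derivable_pt_lim_wnsq N (d : 'I_N -> nat) (c : 'I_N -> R) (z : R -> BV N d) (z' : BV N d) t :
  (forall i k, derivable_pt_lim (fun s => z s i k) t (z' i k)) ->
  derivable_pt_lim (fun s => wnsq c (z s)) t
    (sumR (fun i => c i * (2 * sumR (fun k => z t i k * z' i k)))).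
Proof.
move=> dz; apply: (derivable_pt_lim_sumR (f := fun i s => c i * sumR (fun k => z s i k * z s i k))) => i.
apply: derivable_pt_lim_scal; rewrite mulR_sumr.
apply: (derivable_pt_lim_sumR (f := fun k s => z s i k * z s i k)) => k.
by have := derivable_pt_lim_mult _ _ _ _ _ (dz i k) (dz i k); have -> : z' i k * z t i k + z t i k * z' i k = 2 * (z t i k * z' i k) by ring.
Qed.

Lemma derivable_pt_lim_nsq N (d : 'I_N -> nat) (z : R -> BV N d) (z' : BV N d) t :
  (forall i k, derivable_pt_lim (fun s => z s i k) t (z' i k)) ->
  derivable_pt_lim (fun s => nsq (z s)) t (2 * bvdot (z t) z').
Proof.
move=> dz; have := derivable_pt_lim_wnsq (fun _ => 1) dz.
rewrite /wnsq /nsq /bvdot mulR_sumr (_ : (fun s => _) = fun s => sumR (fun i => sumR (fun k => z s i k * z s i k))).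
  by rewrite (eq_sumR (g := fun i => 2 * sumR (fun k => z t i k * z' i k))) // => i; ring.
by apply: functional_extensionality => s; apply: eq_sumR => i; ring.
Qed.

Lemma exp_decay_of_deriv (V V' : R -> R) k t0 t : t0 <= t ->
  (forall s, t0 <= s <= t -> derivable_pt_lim V s (V' s)) ->
  (forall s, t0 <= s <= t -> V' s <= - k * V s) ->
  V t * exp (k * t) <= V t0 * exp (k * t0).
Proof.
move=> t0t dV V'_le; case: (Req_dec t0 t) => [-> | t0t']; first exact: Rle_refl.
pose W s := V s * exp (k * s).
have dW s : t0 <= s <= t -> derivable_pt_lim W s (exp (k * s) * (V' s + k * V s)).
  move=> s_in; have := derivable_pt_lim_mult _ _ _ _ _ (dV s s_in)
    (derivable_pt_lim_comp _ _ _ _ _ (derivable_pt_lim_scal _ k s _ (derivable_pt_lim_id s)) (derivable_pt_lim_exp (k * s))).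
  by rewrite Rmult_1_r; have -> : V' s * exp (k * s) + V s * (exp (k * s) * k) = exp (k * s) * (V' s + k * V s) by ring.
have [c [mvt c_in]] := MVT_cor2 W _ t0 t ltac:(lra) dW.
have : exp (k * c) * (V' c + k * V c) <= 0.
  by have := exp_pos (k * c); have := V'_le c ltac:(lra); nra.
rewrite /W in mvt; nra.
Qed.

Lemma bv_conv_of_nsq_le N (d : 'I_N -> nat) (z : R -> BV N d) zs K k : 0 < k ->
  (forall t, 1 <= t -> nsq (bvsub (z t) zs) <= K / exp (k * t)) -> bv_conv z zs.
Proof.
move=> k0 bound eps eps0.
have K0 : 0 <= K.
  have := bound 1 (Rle_refl 1); have := nsq_ge0 (bvsub (z 1) zs); have := exp_pos (k * 1).
  move=> e0 ? ?; rewrite (_ : K = K / exp (k * 1) * exp (k * 1)); last by field; lra.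
  by apply: Rmult_le_pos; lra.
exists (1 + K / (k * (eps * eps))) => t t_large.
have ke : 0 < k * (eps * eps) by apply: Rmult_lt_0_compat => //; nra.
have Kk : 0 <= K / (k * (eps * eps)) by apply: Rdiv_le_0_compat.
have exp_big : 1 + k * t <= exp (k * t) by apply: exp_ineq1_le.
have small : K / exp (k * t) < eps * eps.
  apply: (Rmult_lt_reg_r (exp (k * t))); first exact: exp_pos.
  have -> : K / exp (k * t) * exp (k * t) = K by field; have := exp_pos (k * t); lra.
  have : K = k * (eps * eps) * (K / (k * (eps * eps))) by field; lra.
  nra.
rewrite /bvnorm -(sqrt_square eps); last lra.
by apply: sqrt_lt_1_alt; split; [exact: nsq_ge0 | apply: Rle_lt_trans (bound t _) small; lra].
Qed.

Section Lyapunov.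
Variables (N : nat) (n m : 'I_N -> nat) (B : forall i : 'I_N, 'I_(n i) -> 'I_(m i) -> R).
Arguments B : clear implicits.
Variable G : BV N n -> BV N m.
Arguments G : clear implicits.
Variables (Lam mu : R) (us : BV N m).
Arguments us : clear implicits.
Hypotheses (Lam0 : 0 <= Lam) (mu0 : 0 < mu).
Hypothesis G_lip : forall x y, nsq (bvsub (G x) (G y)) <= Lam * nsq (bvsub x y).
Hypothesis G_mono : forall u v,
  bvdot (bvsub (G (ssmap B u)) (G (ssmap B v))) (bvsub u v) >= mu * nsq (bvsub u v).
Hypothesis G_us : forall i l, G (ssmap B us) i l = 0.

(* c dominates the coupling Lam / mu |x - pi u|^2 produced by the u-dynamics; taustar makes the
   O(1 / tau^2) drift of pi u in the x-dynamics small against both mu / 2 and c / 4. *)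
Let K := frob2 B.
Let c := 2 * Lam / mu + 1.
Let A := 2 * K * Lam.

Definition taustar := 1 + 4 * A + 2 * c * A * K / mu.

Lemma K_ge0 : 0 <= K. Proof. exact: frob2_ge0. Qed.
Lemma c_pos : 0 < c.
Proof.
have : 0 <= 2 * Lam / mu by apply: Rdiv_le_0_compat; lra.
by rewrite /c; lra.
Qed.

Lemma taustar_bounds : 1 <= taustar /\ 4 * A <= taustar ^ 2 /\ 2 * c * A * K / mu <= taustar ^ 2.
Proof.
have A0 : 0 <= A by rewrite /A; have := K_ge0; nra.
have : 0 <= 2 * c * A * K / mu.
  by apply: Rdiv_le_0_compat => //; have := c_pos; have := K_ge0; move=> ? ?;
    apply: Rmult_le_pos => //; apply: Rmult_le_pos; lra.
rewrite /taustar /=; nra.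
Qed.

Definition lyap (tau : 'I_N -> R) (x : BV N n) (u : BV N m) :=
  wnsq tau (bvsub u us) + c * nsq (bvsub x (ssmap B u)).

Definition udot (tau : 'I_N -> R) (x : BV N n) : BV N m := fun i l => - / tau i * G x i l.
Arguments udot tau x : clear implicits.

Definition lyap_dot tau x u :=
  sumR (fun i => tau i * (2 * sumR (fun l => bvsub u us l * udot tau x i l)))
  + c * (2 * bvdot (bvsub x (ssmap B u))
                   (fun i k => - x i k + ssmap B u i k - ssmap B (udot tau x) i k)).

Variable tau : 'I_N -> R.
Hypothesis tau_large : forall i, taustar <= tau i.

Lemma tau_pos i : 0 < tau i.
Proof. by have := tau_large i; have := taustar_bounds; lra. Qed.

Lemma nsq_udot_le x : taustar ^ 2 * nsq (udot tau x) <= nsq (G x).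
Proof.
rewrite /nsq /bvdot -!/(bvsum _) mulR_bvsum; apply: ler_bvsum => i l.
have ti := tau_pos i; have := tau_large i; have := taustar_bounds => -[t1 _] tt.
have := Rle_0_sqr (G x i l); rewrite /Rsqr => G2.
have -> : taustar ^ 2 * (udot tau x i l * udot tau x i l)
    = (taustar * taustar) / (tau i * tau i) * (G x i l * G x i l) by rewrite /udot /=; field; lra.
rewrite -[X in _ <= X]Rmult_1_l; apply: Rmult_le_compat_r => //.
apply: (Rmult_le_reg_r (tau i * tau i)); first nra.
have -> : taustar * taustar / (tau i * tau i) * (tau i * tau i) = taustar * taustar by field; lra.
nra.
Qed.

Lemma nsq_G_le x u :
  nsq (G x) <= Lam * (2 * nsq (bvsub x (ssmap B u)) + 2 * K * nsq (bvsub u us)).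
Proof.
rewrite (eq_nsq (y := bvsub (G x) (G (ssmap B us)))); last by move=> i l; rewrite /bvsub G_us; ring.
apply: Rle_trans (G_lip _ _) (Rmult_le_compat_l _ _ _ Lam0 _).
rewrite (eq_nsq (y := fun i k => bvsub x (ssmap B u) k + ssmap B (bvsub u us) i k));
  last by move=> i k; rewrite ssmapB /bvsub; ring.
by apply: Rle_trans (nsqD_le (d := n) _ _) _; have := nsq_ssmap_le B (bvsub u us); rewrite -/K; lra.
Qed.

Lemma udot_term_le x u :
  c * K * nsq (udot tau x) <= c / 4 * nsq (bvsub x (ssmap B u)) + mu / 2 * nsq (bvsub u us).
Proof.
set w := bvsub u us; set e := bvsub x (ssmap B u).
have c0 := c_pos; have K0 := K_ge0; have [t1 [tA tK]] := taustar_bounds.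
apply: (Rmult_le_reg_l (taustar ^ 2)); first nra.
have := Rmult_le_compat_l (c * K) _ _ ltac:(nra) (Rle_trans _ _ _ (nsq_udot_le x) (nsq_G_le x u)).
have := Rmult_le_compat_r (c * nsq e / 4) _ _ ltac:(have := nsq_ge0 e; nra) tA.
have := Rmult_le_compat_r (mu * nsq w / 2) _ _ ltac:(have := nsq_ge0 w; nra) tK.
have -> : 2 * c * A * K / mu * (mu * nsq w / 2) = c * A * K * nsq w by field; lra.
rewrite /A -/w -/e; lra.
Qed.

Lemma lyap_dot_le x u :
  lyap_dot tau x u <= - (mu / 2) * nsq (bvsub u us) - (c / 4) * nsq (bvsub x (ssmap B u)).
Proof.
have := udot_term_le x u.
rewrite /lyap_dot; set w := bvsub u us; set e := bvsub x (ssmap B u) => udot_small.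
have c0 := c_pos; have K0 := K_ge0.
have weighted : sumR (fun i => tau i * (2 * sumR (fun l => w i l * udot tau x i l)))
    = -2 * bvdot (bvsub (G (ssmap B u)) (G (ssmap B us))) w + 2 * bvdot w (bvsub (G (ssmap B u)) (G x)).
  rewrite /bvdot -!/(bvsum _) !mulR_bvsum -bvsumD /bvsum; apply: eq_sumR => i.
  have := tau_pos i; rewrite !mulR_sumr => ti; apply: eq_sumR => l.
  by rewrite /udot /bvsub G_us; field; lra.
have e_term : 2 * bvdot e (fun i k => - x i k + ssmap B u i k - ssmap B (udot tau x) i k)
    = -2 * nsq e + 2 * bvdot e (fun i k => - ssmap B (udot tau x) i k).
  rewrite /nsq /bvdot -!/(bvsum _) !mulR_bvsum -bvsumD; apply: eq_bvsum => i k.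
  by rewrite /e /bvsub; ring.
have young_w := young w (bvsub (G (ssmap B u)) (G x)) mu0.
rewrite (nsq_bvsubC (G (ssmap B u))) in young_w.
have young_e := young e (fun i k => - ssmap B (udot tau x) i k) Rlt_0_1.
rewrite nsqN in young_e.
have pi_udot := nsq_ssmap_le B (udot tau x); rewrite -/K in pi_udot.
have lam_mu : / mu * nsq (bvsub (G x) (G (ssmap B u))) <= c / 2 * nsq e.
  apply: Rle_trans (Rmult_le_compat_l _ _ _ (Rlt_le _ _ (Rinv_0_lt_compat _ mu0)) (G_lip x (ssmap B u))) _.
  rewrite -/e; have -> : c / 2 * nsq e = / mu * (Lam * nsq e) + nsq e / 2 by rewrite /c; field; lra.
  by have := nsq_ge0 e; lra.
have := G_mono u us; rewrite -/w => mono.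
have := Rmult_le_compat_l _ _ _ (Rlt_le _ _ c0) young_e.
have := Rmult_le_compat_l _ _ _ (Rlt_le _ _ c0) pi_udot.
rewrite weighted e_term; lra.
Qed.

Let T := 1 + sumR tau.
Let rate := Rmin (mu / (2 * T)) (1 / 4).

Lemma rate_pos : 0 < rate.
Proof.
have : 0 <= sumR tau by apply: sumR_ge0 => i; apply/Rlt_le/tau_pos.
by move=> ?; apply: Rmin_pos; [apply: Rdiv_lt_0_compat; rewrite /T; lra | lra].
Qed.

Lemma lyap_dot_le_lyap x u : lyap_dot tau x u <= - rate * lyap tau x u.
Proof.
set W := nsq (bvsub u us); set E := nsq (bvsub x (ssmap B u)).
have := lyap_dot_le x u; rewrite -/W -/E /lyap -/W -/E.
have tau_sum0 : 0 <= sumR tau by apply: sumR_ge0 => i; apply/Rlt_le/tau_pos.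
have T0 : 0 < T by rewrite /T; lra.
have kT : rate * T <= mu / 2.
  have := Rmult_le_compat_r _ _ _ (Rlt_le _ _ T0) (Rmin_l (mu / (2 * T)) (1 / 4)).
  by have -> : mu / (2 * T) * T = mu / 2 by field; lra.
have k4 : rate <= 1 / 4 := Rmin_r _ _.
have k0 := rate_pos; have c0 := c_pos; have W0 : 0 <= W := nsq_ge0 _; have E0 : 0 <= E := nsq_ge0 _.
have wW : wnsq tau (bvsub u us) <= T * W.
  apply: Rle_trans (wnsq_le _ (fun i => Rlt_le _ _ (tau_pos i))) _.
  by apply: Rmult_le_compat_r => //; rewrite /T; lra.
have := Rmult_le_compat_l _ _ _ (Rlt_le _ _ k0) wW.
have := Rmult_le_compat_r _ _ _ W0 kT.
have := Rmult_le_compat_r _ _ _ (Rmult_le_pos _ _ (Rlt_le _ _ c0) E0) k4.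
lra.
Qed.

Variables (x : R -> BV N n) (u : R -> BV N m).
Arguments x : clear implicits.
Arguments u : clear implicits.
Hypothesis ode : forall t, 0 < t ->
  (forall i k, derivable_pt_lim (fun s => x s i k) t (- x t i k + sumR (fun l => B i k l * u t i l))) /\
  (forall i l, derivable_pt_lim (fun s => u s i l) t (- / tau i * G (x t) i l)).

Lemma lyap_deriv t : 0 < t ->
  derivable_pt_lim (fun s => lyap tau (x s) (u s)) t (lyap_dot tau (x t) (u t)).
Proof.
move=> t0; have [dx du] := ode t0.
apply: derivable_pt_lim_plus.
  apply: (derivable_pt_lim_wnsq tau (z := fun s => bvsub (u s) us) (z' := udot tau (x t))) => i l.
  by have := derivable_pt_lim_minus _ _ _ _ _ (du i l) (derivable_pt_lim_const (us i l) t); rewrite Rminus_0_r.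
apply: derivable_pt_lim_scal.
apply: (derivable_pt_lim_nsq (z := fun s => bvsub (x s) (ssmap B (u s)))
  (z' := fun i k => - x t i k + ssmap B (u t) i k - ssmap B (udot tau (x t)) i k)) => i k.
apply: derivable_pt_lim_minus => //.
apply: (derivable_pt_lim_sumR (f := fun l s => B i k l * u s i l)) => l.
exact: derivable_pt_lim_scal.
Qed.

Lemma lyapunov_convergence : bv_conv x (ssmap B us) /\ bv_conv u us.
Proof.
pose V1 := lyap tau (x 1) (u 1) * exp (rate * 1).
have decay t : 1 <= t -> lyap tau (x t) (u t) <= V1 / exp (rate * t).
  move=> t1; have := exp_pos (rate * t) => e0.
  have := exp_decay_of_deriv t1 (fun s s_in => @lyap_deriv s ltac:(lra)) (fun s _ => lyap_dot_le_lyap _ _).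
  move=> dec; apply: (Rmult_le_reg_r (exp (rate * t))) => //.
  by have -> : V1 / exp (rate * t) * exp (rate * t) = V1 by field; lra.
have [t1 _] := taustar_bounds; have c0 := c_pos.
have W_le t : 1 <= t -> nsq (bvsub (u t) us) <= (V1 / taustar) / exp (rate * t).
  move=> t_ge1; have := decay t t_ge1; rewrite /lyap.
  have := wnsq_ge (bvsub (u t) us) tau_large; have := nsq_ge0 (bvsub (x t) (ssmap B (u t))).
  have := exp_pos (rate * t) => e0 E0 wW lyap_le.
  apply: (Rmult_le_reg_l taustar); first lra.
  have -> : taustar * (V1 / taustar / exp (rate * t)) = V1 / exp (rate * t) by field; lra.
  nra.
have E_le t : 1 <= t -> nsq (bvsub (x t) (ssmap B (u t))) <= (V1 / c) / exp (rate * t).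
  move=> t_ge1; have := decay t t_ge1; rewrite /lyap.
  have := wnsq_ge (bvsub (u t) us) tau_large; have := nsq_ge0 (bvsub (u t) us).
  have := exp_pos (rate * t) => e0 W0 wW lyap_le.
  apply: (Rmult_le_reg_l c) => //.
  have -> : c * (V1 / c / exp (rate * t)) = V1 / exp (rate * t) by field; lra.
  nra.
split; last exact: bv_conv_of_nsq_le rate_pos W_le.
apply: (bv_conv_of_nsq_le (K := 2 * (V1 / c) + 2 * K * (V1 / taustar)) rate_pos) => t t_ge1.
rewrite (eq_nsq (y := fun i k => bvsub (x t) (ssmap B (u t)) k + ssmap B (bvsub (u t) us) i k));
  last by move=> i k; rewrite ssmapB /bvsub; ring.
apply: Rle_trans (nsqD_le (d := n) _ _) _.
have := Rle_trans _ _ _ (nsq_ssmap_le B _) (Rmult_le_compat_l _ _ _ K_ge0 (W_le t t_ge1)).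
have := E_le t t_ge1; have := exp_pos (rate * t) => e0.
have -> : (2 * (V1 / c) + 2 * K * (V1 / taustar)) / exp (rate * t)
    = 2 * (V1 / c / exp (rate * t)) + 2 * (K * (V1 / taustar / exp (rate * t))) by field; lra.
lra.
Qed.

End Lyapunov.

Theorem theorem1
  (N : nat) (n m : 'I_N -> nat)
  (B : forall i : 'I_N, 'I_(n i) -> 'I_(m i) -> R)
  (h : 'I_N -> BV N n -> R)
  (Fx : forall i : 'I_N, BV N n -> 'I_(n i) -> R)
  (F : forall i : 'I_N, BV N m -> 'I_(m i) -> R)
  (Hdiff : forall i, PartialGrad (h i) i (Fx i))
  (Hlip : forall i, exists L, forall x y : BV N n,
      vnorm (fun k => Fx i x k - Fx i y k) <= L * bvnorm (bvsub x y))
  (HF : forall i, PartialGrad (fun u => h i (ssmap B u)) i (F i))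
  (Hmon : exists mu, 0 < mu /\ forall u v : BV N m,
      bvdot (fun i l => F i u l - F i v l) (bvsub u v) >= mu * (bvnorm (bvsub u v))^2) :
  exists ustar : BV N m, NashEq B h ustar /\
  exists taustar, 0 < taustar /\
    forall tau : 'I_N -> R, (forall i, taustar <= tau i) ->
    forall (x : R -> BV N n) (u : R -> BV N m),
      (forall t, 0 < t ->
         (forall i k, derivable_pt_lim (fun s => x s i k) t
                        (- x t i k + sumR (fun l => B i k l * u t i l))) /\
         (forall i l, derivable_pt_lim (fun s => u s i l) t
                        (- / tau i * sumR (fun k => B i k l * Fx i (x t) k)))) ->
      bv_conv x (ssmap B ustar) /\ bv_conv u ustar.
Proof.
have [mu [mu0 F_mono]] := Hmon.
have [Lx [Lx0 Fx_lip]] := nsq_lipschitz_of_blocks Hlip.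
pose G x := ssmapT B (fun i => Fx i x).
have F_G i u l : F i u l = G (ssmap B u) i l := PartialGrad_unique (HF i) (PartialGrad_ssmap B (Hdiff i)) u l.
have Lam0 : 0 <= frob2 B * Lx := Rmult_le_pos _ _ (frob2_ge0 B) Lx0.
have G_lip x y : nsq (bvsub (G x) (G y)) <= frob2 B * Lx * nsq (bvsub x y).
  by rewrite Rmult_assoc; apply: Rle_trans (nsq_ssmapT_lip _ _ _) (Rmult_le_compat_l _ _ _ (frob2_ge0 B) (Fx_lip x y)).
have G_mono u v : bvdot (bvsub (G (ssmap B u)) (G (ssmap B v))) (bvsub u v) >= mu * nsq (bvsub u v).
  rewrite -bvnorm_sq (eq_bvdotl (y := fun i l => F i u l - F i v l)) => [|i l]; first exact: F_mono.
  by rewrite /bvsub !F_G.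
have Phi_lip u v : nsq (bvsub (G (ssmap B u)) (G (ssmap B v))) <= frob2 B * Lx * frob2 B * nsq (bvsub u v).
  by apply: Rle_trans (G_lip _ _) _; have := Rmult_le_compat_l _ _ _ Lam0 (nsq_ssmap_lip B u v); lra.
have [us G_us] := exists_zero_of_strongly_monotone (Rmult_le_pos _ _ Lam0 (frob2_ge0 B)) mu0 Phi_lip G_mono.
exists us; split.
  apply: (NashEq_of_monotone_zero HF) => [u v|i l]; last by rewrite F_G G_us.
  by have := F_mono u v; have := pow2_ge_0 (bvnorm (bvsub u v)); nra.
have [t1 _] := taustar_bounds B Lam0 mu0.
exists (taustar B (frob2 B * Lx) mu); split=> [|tau tau_large x u ode]; first lra.
exact: (lyapunov_convergence Lam0 mu0 G_lip G_mono G_us tau_large ode).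
Qed.
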